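(* Let $N\ge 2$, $x_0<x_1<\dots<x_N$, $h_i=x_i-x_{i-1}$, and let $f_1,\dots,f_N\in\mathbb{R}$ be a histogram. Let $I=[x_0,x_N]$, $I_i=[x_{i-1},x_i)$ for $i<N$, $I_N=[x_{N-1},x_N]$, and for $i=1,\dots,N$ let $L_i(x)=a_ix+b_i$ with $a_i=\frac{x_i-x_{i-1}}{x_N-x_0}$, $b_i=\frac{x_Nx_{i-1}-x_0x_i}{x_N-x_0}$, let $\alpha_i$ be arbitrary with $|\alpha_i|<1$, and let $q_i:I\to\mathbb{R}$ be Lipschitz continuous. Let $f$ be the unique bounded function on $I$ with $f(x)=\alpha_if(L_i^{-1}(x))+q_i(L_i^{-1}(x))$ for $x\in I_i$, $i=1,\dots,N$. Suppose there are real numbers $y_0,y_N$ such that $$\int_Iq_i(x)\,dx=\frac{h_if_i-\alpha_ia_i\sum_{j=1}^Nh_jf_j}{a_i}\quad(i=1,\dots,N),$$ $$q_1(x_0)=y_0(1-\alpha_1),\quad q_N(x_N)=y_N(1-\alpha_N),\quad \alpha_{i+1}y_0+q_{i+1}(x_0)=\alpha_iy_N+q_i(x_N)\ (i=1,\dots,N-1).$$ Then $f$ is continuous on $I$ and $\int_{x_{i-1}}^{x_i}f(x)\,dx=h_if_i$ for all $i=1,\dots,N$. *)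

From Stdlib Require Import Reals Lra.
From Coquelicot Require Import Coquelicot.
Open Scope R_scope.

(* Nodes x_0 < ... < x_N are given as x : nat -> R; indices i range over 1..N. *)

Definition hstep (x : nat -> R) (i : nat) : R := x i - x (i - 1)%nat.

Definition a_coef (x : nat -> R) (N i : nat) : R :=
  (x i - x (i - 1)%nat) / (x N - x 0%nat).
Definition b_coef (x : nat -> R) (N i : nat) : R :=
  (x N * x (i - 1)%nat - x 0%nat * x i) / (x N - x 0%nat).
Definition L_map (x : nat -> R) (N i : nat) (t : R) : R :=
  a_coef x N i * t + b_coef x N i.
Definition L_inv (x : nat -> R) (N i : nat) (t : R) : R :=
  (t - b_coef x N i) / a_coef x N i.

Definition in_I (x : nat -> R) (N : nat) (t : R) : Prop := x 0%nat <= t <= x N.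

Definition in_Ii (x : nat -> R) (N i : nat) (t : R) : Prop :=
  if (i <? N)%nat then x (i - 1)%nat <= t < x i
  else x (i - 1)%nat <= t <= x i.

Definition lipschitz_on (D : R -> Prop) (g : R -> R) : Prop :=
  exists K : R, forall u v, D u -> D v -> Rabs (g u - g v) <= K * Rabs (u - v).

Definition bounded_on (D : R -> Prop) (g : R -> R) : Prop :=
  exists M : R, forall t, D t -> Rabs (g t) <= M.

Definition continuous_on_set (D : R -> Prop) (g : R -> R) : Prop :=
  forall t, D t -> filterlim g (within D (locally t)) (locally (g t)).

(* A bound r on the oscillation of f (the limsup of |f s - f t| as s -> t in I) at every point
   propagates through the fixed-point equation: on the piece [x_{i-1}, x_i] the map L_i^{-1} is
   affine onto I and q_i is Lipschitz, so the oscillation there is at most |alpha_i| r.  The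
   endpoint conditions force f(x_0) = y_0 and f(x_N) = y_N, which makes the equations of adjacent
   pieces agree at the inner nodes, so the pieces glue and the bound becomes (max_i |alpha_i|) r.
   Iterating from 2 sup |f| shows the oscillation vanishes, i.e. f is continuous.
   Integrating the equation over a piece and substituting gives
   int_{x_{i-1}}^{x_i} f = a_i (alpha_i F + int_I q_i) with F = int_I f; summing over i yields
   F - S = sigma (F - S) with S = sum_j h_j f_j and sigma = sum_i a_i alpha_i < 1, so F = S and
   each piece integral is h_i f_i. *)

From Stdlib Require Import Reals Lra Lia.
From Coquelicot Require Import Coquelicot.
Open Scope R_scope.

Definition osc_at_le (D : R -> Prop) (f : R -> R) (t r : R) : Prop :=
  forall eta, 0 < eta -> exists d, 0 < d /\
    forall s, D s -> Rabs (s - t) < d -> Rabs (f s - f t) <= r + eta.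

Lemma osc_at_le_le D f t r r' : r <= r' -> osc_at_le D f t r -> osc_at_le D f t r'.
Proof.
intros Hr Hf eta Heta; destruct (Hf eta Heta) as [d [Hd H]].
exists d; split; [exact Hd |]; intros s Hs Hst; specialize (H s Hs Hst); lra.
Qed.

Lemma osc_at_le_ext D f g t r : (forall s, D s -> f s = g s) -> D t ->
  osc_at_le D g t r -> osc_at_le D f t r.
Proof.
intros Hfg Ht Hg eta Heta; destruct (Hg eta Heta) as [d [Hd H]].
exists d; split; [exact Hd |]; intros s Hs Hst.
rewrite (Hfg s Hs), (Hfg t Ht); exact (H s Hs Hst).
Qed.

Lemma osc_at_le_local D E f t r :
  (exists d0, 0 < d0 /\ forall s, D s -> Rabs (s - t) < d0 -> E s) ->
  osc_at_le E f t r -> osc_at_le D f t r.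
Proof.
intros [d0 [Hd0 HDE]] Hf eta Heta; destruct (Hf eta Heta) as [d [Hd H]].
exists (Rmin d d0); split; [apply Rmin_pos; assumption |].
intros s Hs Hst; pose proof (Rmin_l d d0); pose proof (Rmin_r d d0).
apply H; [apply HDE |]; auto; lra.
Qed.

Lemma osc_at_le_singleton D f t r : 0 <= r -> (forall s, D s -> s = t) -> osc_at_le D f t r.
Proof.
intros Hr HD eta Heta; exists 1; split; [lra |]; intros s Hs _.
rewrite (HD s Hs), Rminus_diag, Rabs_R0; lra.
Qed.

Lemma osc_at_le_split D f t r :
  osc_at_le (fun s => D s /\ t <= s) f t r -> osc_at_le (fun s => D s /\ s <= t) f t r ->
  osc_at_le D f t r.
Proof.
intros Hright Hleft eta Heta.
destruct (Hright eta Heta) as [d1 [Hd1 H1]], (Hleft eta Heta) as [d2 [Hd2 H2]].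
exists (Rmin d1 d2); split; [apply Rmin_pos; assumption |].
intros s Hs Hst; pose proof (Rmin_l d1 d2); pose proof (Rmin_r d1 d2).
destruct (Rle_lt_dec t s).
- apply H1; [split |]; auto; lra.
- apply H2; [split |]; auto; lra.
Qed.

Lemma osc_at_le_lincomb D u v a t r r' :
  osc_at_le D u t r -> osc_at_le D v t r' ->
  osc_at_le D (fun s => a * u s + v s) t (Rabs a * r + r').
Proof.
intros Hu Hv eta Heta.
set (eta1 := eta / 2 / (Rabs a + 1)).
assert (Heta1 : 0 < eta1) by (unfold eta1; pose proof (Rabs_pos a);
  apply Rdiv_lt_0_compat; lra).
assert (Haeta1 : Rabs a * eta1 <= eta / 2).
{ pose proof (Rabs_pos a).
  apply Rle_trans with ((Rabs a + 1) * eta1); [nra | unfold eta1; right; field; lra]. }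
destruct (Hu eta1 Heta1) as [d1 [Hd1 H1]], (Hv (eta / 2) ltac:(lra)) as [d2 [Hd2 H2]].
exists (Rmin d1 d2); split; [apply Rmin_pos; assumption |].
intros s Hs Hst; pose proof (Rmin_l d1 d2); pose proof (Rmin_r d1 d2).
specialize (H1 s Hs ltac:(lra)); specialize (H2 s Hs ltac:(lra)).
replace (a * u s + v s - (a * u t + v t)) with (a * (u s - u t) + (v s - v t)) by ring.
eapply Rle_trans; [apply Rabs_triang |]; rewrite Rabs_mult.
pose proof (Rmult_le_compat_l (Rabs a) _ _ (Rabs_pos a) H1); lra.
Qed.

Lemma osc_at_le_comp D J g phi t r :
  (forall s, J s -> D (phi s)) -> osc_at_le J phi t 0 ->
  osc_at_le D g (phi t) r -> osc_at_le J (fun s => g (phi s)) t r.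
Proof.
intros HJD Hphi Hg eta Heta; destruct (Hg eta Heta) as [d1 [Hd1 H1]].
destruct (Hphi (d1 / 2) ltac:(lra)) as [d [Hd H]].
exists d; split; [exact Hd |]; intros s Hs Hst.
apply H1; [apply HJD, Hs |]; specialize (H s Hs Hst); lra.
Qed.

Lemma lipschitz_on_osc_at_le D g t : lipschitz_on D g -> D t -> osc_at_le D g t 0.
Proof.
intros [K HK] Ht eta Heta.
exists (eta / (Rabs K + 1)); split; [apply Rdiv_lt_0_compat; pose proof (Rabs_pos K); lra |].
intros s Hs Hst; specialize (HK s t Hs Ht).
assert (Rabs K * Rabs (s - t) <= eta).
{ apply Rle_trans with ((Rabs K + 1) * (eta / (Rabs K + 1))); [| right; field; pose proof (Rabs_pos K); lra].
  pose proof (Rabs_pos K); pose proof (Rabs_pos (s - t)); nra. }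
pose proof (Rle_abs K); pose proof (Rabs_pos (s - t)); nra.
Qed.

Lemma bounded_on_osc_at_le D f : bounded_on D f ->
  exists r, 0 <= r /\ forall t, D t -> osc_at_le D f t r.
Proof.
intros [M HM]; exists (2 * Rabs M); split; [pose proof (Rabs_pos M); lra |].
intros t Ht eta Heta; exists 1; split; [lra |]; intros s Hs _.
unfold Rminus; eapply Rle_trans; [apply Rabs_triang |]; rewrite Rabs_Ropp.
pose proof (HM s Hs); pose proof (HM t Ht); pose proof (Rle_abs M); lra.
Qed.

Lemma osc_at_le_geometric D f t c r : 0 <= c < 1 ->
  (forall n, osc_at_le D f t (c ^ n * r)) -> forall eps, 0 < eps -> osc_at_le D f t eps.
Proof.
intros Hc Hf eps Heps.
destruct (pow_lt_1_zero c ltac:(rewrite Rabs_right; lra) (eps / (Rabs r + 1))) as [n Hn].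
{ apply Rdiv_lt_0_compat; pose proof (Rabs_pos r); lra. }
specialize (Hn n (le_n n)); rewrite Rabs_right in Hn by (apply Rle_ge, pow_le; lra).
apply (osc_at_le_le _ _ _ (c ^ n * r)); [| apply Hf].
assert (Hcn : 0 <= c ^ n) by (apply pow_le; lra).
assert (c ^ n * (Rabs r + 1) <= eps).
{ apply Rle_trans with (eps / (Rabs r + 1) * (Rabs r + 1)); [pose proof (Rabs_pos r); nra |].
  right; field; pose proof (Rabs_pos r); lra. }
pose proof (Rle_abs r); nra.
Qed.

Lemma continuous_on_set_of_osc D f :
  (forall t, D t -> forall eps, 0 < eps -> osc_at_le D f t eps) -> continuous_on_set D f.
Proof.
intros Hf t Ht; apply filterlim_locally; intros [eps Heps].
destruct (Hf t Ht (eps / 2) ltac:(lra) (eps / 4) ltac:(lra)) as [d [Hd H]].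
exists (mkposreal d Hd); intros s Hst Hs.
change (Rabs (f s - f t) < eps); change (Rabs (s - t) < d) in Hst.
specialize (H s Hs Hst); lra.
Qed.

Definition clamp (a b t : R) : R := Rmax a (Rmin t b).

Lemma clamp_between a b t : a <= b -> a <= clamp a b t <= b.
Proof.
intros Hab; unfold clamp; split; [apply Rmax_l |].
apply Rmax_lub; [exact Hab | apply Rmin_r].
Qed.

Lemma clamp_id a b t : a <= t <= b -> clamp a b t = t.
Proof. intros [Ha Hb]; unfold clamp; rewrite Rmin_left by lra; apply Rmax_right; lra. Qed.

Lemma clamp_dist a b s t : Rabs (clamp a b s - clamp a b t) <= Rabs (s - t).
Proof.
unfold clamp, Rmax, Rmin.
destruct (Rle_dec s b), (Rle_dec t b), (Rle_dec a s), (Rle_dec a t), (Rle_dec a b);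
  unfold Rabs; repeat destruct Rcase_abs; lra.
Qed.

Lemma continuous_clamp_comp a b f : a <= b ->
  continuous_on_set (fun t => a <= t <= b) f -> forall z, continuous (fun t => f (clamp a b t)) z.
Proof.
intros Hab Hf z; apply (filterlim_comp _ _ _ (clamp a b) f _ (within (fun t => a <= t <= b)
  (locally (clamp a b z)))); [| apply Hf, clamp_between, Hab].
intros P [eps HP]; exists eps; intros s Hs.
apply HP; [| apply clamp_between, Hab].
change (Rabs (clamp a b s - clamp a b z) < eps); change (Rabs (s - z) < eps) in Hs.
eapply Rle_lt_trans; [apply clamp_dist | exact Hs].
Qed.

Lemma ex_RInt_continuous_on_set a b c d f : a <= c -> c <= d -> d <= b ->
  continuous_on_set (fun t => a <= t <= b) f -> ex_RInt f c d.
Proof.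
intros Hac Hcd Hdb Hf.
apply (ex_RInt_ext (fun t => f (clamp a b t))).
- intros t Ht; rewrite Rmin_left, Rmax_right in Ht by exact Hcd.
  rewrite clamp_id; [reflexivity | lra].
- apply (@ex_RInt_continuous R_CompleteNormedModule); intros z _.
  apply continuous_clamp_comp; [lra | exact Hf].
Qed.

Lemma is_RInt_chain f (u l : nat -> R) n :
  (forall i, (1 <= i <= n)%nat -> is_RInt f (u (i - 1)%nat) (u i) (l i)) ->
  is_RInt f (u 0%nat) (u n) (sum_n_m l 1 n).
Proof.
induction n as [| n IH]; intros Hl.
- rewrite sum_n_m_zero by lia; apply (@is_RInt_point R_NormedModule).
- rewrite sum_n_Sm by lia; apply (is_RInt_Chasles f _ (u n)).
  + apply IH; intros i Hi; apply Hl; lia.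
  + replace n with (S n - 1)%nat at 1 by lia; apply Hl; lia.
Qed.

Lemma sum_n_m_le_loc (u v : nat -> R) n m : (forall k, (n <= k <= m)%nat -> u k <= v k) ->
  sum_n_m u n m <= sum_n_m v n m.
Proof.
intros Huv; rewrite (sum_n_m_ext_loc u (fun k => Rmin (u k) (v k)))
  by (intros; rewrite Rmin_left; auto).
apply sum_n_m_le; intros; apply Rmin_r.
Qed.

Lemma sum_n_m_telescope (u : nat -> R) n :
  sum_n_m (fun i => u i - u (i - 1)%nat) 1 n = u n - u 0%nat.
Proof.
induction n as [| n IH].
- rewrite sum_n_m_zero by lia; unfold zero; simpl; ring.
- rewrite sum_n_Sm, IH by lia; unfold plus; simpl.
  replace (n - 0)%nat with n by lia; ring.
Qed.

Lemma uniform_bound_lt_1 (u : nat -> R) n : (forall i, (1 <= i <= n)%nat -> u i < 1) ->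
  exists c, 0 <= c < 1 /\ forall i, (1 <= i <= n)%nat -> u i <= c.
Proof.
induction n as [| n IH]; intros Hu.
- exists 0; split; [lra | intros; lia].
- destruct IH as [c [Hc Hci]]; [intros i Hi; apply Hu; lia |].
  exists (Rmax c (u (S n))); split.
  + split; [eapply Rle_trans; [apply Hc | apply Rmax_l] |].
    apply Rmax_lub_lt; [lra | apply Hu; lia].
  + intros i Hi; destruct (Nat.eq_dec i (S n)) as [-> | Hne]; [apply Rmax_r |].
    eapply Rle_trans; [apply Hci; lia | apply Rmax_l].
Qed.

Lemma nodes_le N x : (forall i, (1 <= i <= N)%nat -> x (i - 1)%nat < x i) ->
  forall k m, (k <= m <= N)%nat -> x k <= x m.
Proof.
intros Hx k m; induction m as [| m IH]; intros Hkm.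
- replace k with 0%nat by lia; lra.
- destruct (Nat.eq_dec k (S m)) as [-> | Hne]; [lra |].
  pose proof (Hx (S m) ltac:(lia)) as Hm; replace (S m - 1)%nat with m in Hm by lia.
  pose proof (IH ltac:(lia)); lra.
Qed.

Lemma node_piece_right N x t : x 0%nat <= t < x N ->
  exists i, (1 <= i <= N)%nat /\ x (i - 1)%nat <= t < x i.
Proof.
intros [H0 HN].
enough (forall k, (k <= N)%nat -> t < x k -> exists i, (1 <= i <= k)%nat /\ x (i - 1)%nat <= t < x i)
  as Hk by (destruct (Hk N (le_n N) HN) as [i Hi]; exists i; exact Hi).
induction k as [| k IH]; intros Hk Ht; [lra |].
destruct (Rlt_le_dec t (x k)) as [Hlt | Hle].
- destruct (IH ltac:(lia) Hlt) as [i [Hi Hti]]; exists i; split; [lia | exact Hti].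
- exists (S k); replace (S k - 1)%nat with k by lia; split; [lia | lra].
Qed.

Lemma node_piece_left N x t : x 0%nat < t <= x N ->
  exists i, (1 <= i <= N)%nat /\ x (i - 1)%nat < t <= x i.
Proof.
intros [H0 HN].
enough (forall k, (k <= N)%nat -> t <= x k -> exists i, (1 <= i <= k)%nat /\ x (i - 1)%nat < t <= x i)
  as Hk by (destruct (Hk N (le_n N) HN) as [i Hi]; exists i; exact Hi).
induction k as [| k IH]; intros Hk Ht; [lra |].
destruct (Rle_lt_dec t (x k)) as [Hle | Hlt].
- destruct (IH ltac:(lia) Hle) as [i [Hi Hti]]; exists i; split; [lia | exact Hti].
- exists (S k); replace (S k - 1)%nat with k by lia; split; [lia | lra].
Qed.

Lemma in_Ii_open x N i t : x (i - 1)%nat <= t < x i -> in_Ii x N i t.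
Proof. intros Ht; unfold in_Ii; destruct (i <? N)%nat; lra. Qed.

Lemma in_Ii_last x N t : x (N - 1)%nat <= t <= x N -> in_Ii x N N t.
Proof. intros Ht; unfold in_Ii; rewrite Nat.ltb_irrefl; exact Ht. Qed.

Lemma a_coef_pos x N i : x 0%nat < x N -> x (i - 1)%nat < x i -> 0 < a_coef x N i.
Proof. intros HN Hi; unfold a_coef; apply Rdiv_lt_0_compat; lra. Qed.

Lemma sum_a_coef x N : x 0%nat < x N -> sum_n_m (a_coef x N) 1 N = 1.
Proof.
intros HN; unfold a_coef.
rewrite (sum_n_m_ext _ (fun i => mult (/ (x N - x 0%nat)) (x i - x (i - 1)%nat)))
  by (intros; unfold mult; simpl; unfold Rdiv; ring).
rewrite sum_n_m_mult_l, sum_n_m_telescope; unfold mult; simpl; field; lra.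
Qed.

Lemma L_inv_sub x N i s t : L_inv x N i s - L_inv x N i t = (s - t) / a_coef x N i.
Proof. unfold L_inv, Rdiv; ring. Qed.

Lemma L_inv_left x N i : x 0%nat < x N -> x (i - 1)%nat < x i ->
  L_inv x N i (x (i - 1)%nat) = x 0%nat.
Proof. intros HN Hi; unfold L_inv, a_coef, b_coef; field; lra. Qed.

Lemma L_inv_right x N i : x 0%nat < x N -> x (i - 1)%nat < x i -> L_inv x N i (x i) = x N.
Proof. intros HN Hi; unfold L_inv, a_coef, b_coef; field; lra. Qed.

Lemma L_inv_lipschitz x N i (D : R -> Prop) : lipschitz_on D (L_inv x N i).
Proof.
exists (Rabs (/ a_coef x N i)); intros u v _ _.
rewrite L_inv_sub; unfold Rdiv; rewrite Rabs_mult; lra.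
Qed.

Section SelfAffineHistogram.

Variables (N : nat) (x fh alpha : nat -> R) (q : nat -> R -> R) (f : R -> R) (y0 yN : R).

Hypothesis HN : (2 <= N)%nat.
Hypothesis Hx : forall i, (1 <= i <= N)%nat -> x (i - 1)%nat < x i.
Hypothesis Halpha : forall i, (1 <= i <= N)%nat -> Rabs (alpha i) < 1.
Hypothesis Hq : forall i, (1 <= i <= N)%nat -> lipschitz_on (in_I x N) (q i).
Hypothesis Hf_bounded : bounded_on (in_I x N) f.
Hypothesis Hf : forall i t, (1 <= i <= N)%nat -> in_Ii x N i t ->
  f t = alpha i * f (L_inv x N i t) + q i (L_inv x N i t).
Hypothesis Hq_int : forall i, (1 <= i <= N)%nat ->
  is_RInt (q i) (x 0%nat) (x N)
    ((hstep x i * fh i - alpha i * a_coef x N i * sum_n_m (fun j => hstep x j * fh j) 1 N)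
     / a_coef x N i).
Hypothesis Hy0 : q 1%nat (x 0%nat) = y0 * (1 - alpha 1%nat).
Hypothesis HyN : q N (x N) = yN * (1 - alpha N).
Hypothesis Hy_match : forall i, (1 <= i <= N - 1)%nat ->
  alpha (i + 1)%nat * y0 + q (i + 1)%nat (x 0%nat) = alpha i * yN + q i (x N).

Let piece i t := x (i - 1)%nat <= t <= x i.

Lemma span_pos : x 0%nat < x N.
Proof.
pose proof (nodes_le N x Hx 0 (N - 1) ltac:(lia)); pose proof (Hx N ltac:(lia)); lra.
Qed.

Lemma L_inv_in_I i t : (1 <= i <= N)%nat -> piece i t -> in_I x N (L_inv x N i t).
Proof.
intros Hi [Hl Hr]; pose proof span_pos; pose proof (Hx i Hi).
pose proof (a_coef_pos x N i ltac:(lra) ltac:(lra)) as Ha.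
pose proof (L_inv_sub x N i t (x (i - 1)%nat)) as H1; pose proof (L_inv_sub x N i (x i) t) as H2.
rewrite L_inv_left in H1 by lra; rewrite L_inv_right in H2 by lra.
assert (0 <= (t - x (i - 1)%nat) / a_coef x N i) by (apply Rdiv_le_0_compat; lra).
assert (0 <= (x i - t) / a_coef x N i) by (apply Rdiv_le_0_compat; lra).
unfold in_I; lra.
Qed.

Lemma f_at_left_end : f (x 0%nat) = y0.
Proof.
pose proof span_pos; pose proof (Hx 1%nat ltac:(lia)) as H1; simpl in H1.
pose proof (Hf 1%nat (x 0%nat) ltac:(lia) ltac:(apply in_Ii_open; simpl; lra)) as Hfix.
rewrite L_inv_left, Hy0 in Hfix by (simpl; lra).
pose proof (Halpha 1%nat ltac:(lia)) as Ha; apply Rabs_def2 in Ha; nra.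
Qed.

Lemma f_at_right_end : f (x N) = yN.
Proof.
pose proof span_pos; pose proof (Hx N ltac:(lia)).
pose proof (Hf N (x N) ltac:(lia) ltac:(apply in_Ii_last; lra)) as Hfix.
rewrite L_inv_right, HyN in Hfix by lra.
pose proof (Halpha N ltac:(lia)) as Ha; apply Rabs_def2 in Ha; nra.
Qed.

(* At an inner node x_i the matching condition turns the equation of piece i into that of
   piece i + 1 at its left end. *)
Lemma f_self_affine_on_piece i t : (1 <= i <= N)%nat -> piece i t ->
  f t = alpha i * f (L_inv x N i t) + q i (L_inv x N i t).
Proof.
intros Hi [Hl Hr]; pose proof span_pos; pose proof (Hx i Hi).
destruct (Rlt_le_dec t (x i)) as [Hlt | Hge]; [apply Hf; [exact Hi | apply in_Ii_open; lra] |].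
replace t with (x i) by lra; clear Hl Hr Hge.
destruct (Nat.eq_dec i N) as [-> | HiN]; [apply Hf; [exact Hi | apply in_Ii_last; lra] |].
pose proof (Hx (i + 1)%nat ltac:(lia)) as Hi1.
replace (i + 1 - 1)%nat with i in Hi1 by lia.
rewrite L_inv_right, f_at_right_end, <- Hy_match, <- f_at_left_end by (lra || lia).
rewrite <- (L_inv_left x N (i + 1)) by (replace (i + 1 - 1)%nat with i by lia; lra).
replace (i + 1 - 1)%nat with i by lia.
apply Hf; [lia | apply in_Ii_open; replace (i + 1 - 1)%nat with i by lia; lra].
Qed.

Lemma osc_on_piece i t c r : (1 <= i <= N)%nat -> piece i t -> Rabs (alpha i) <= c -> 0 <= r ->
  osc_at_le (in_I x N) f (L_inv x N i t) r -> osc_at_le (piece i) f t (c * r).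
Proof.
intros Hi Ht Hc Hr Hosc.
assert (HL : forall s, piece i s -> in_I x N (L_inv x N i s))
  by (intros; apply L_inv_in_I; assumption).
assert (HL0 : osc_at_le (piece i) (L_inv x N i) t 0)
  by (apply lipschitz_on_osc_at_le; [apply L_inv_lipschitz | exact Ht]).
apply (osc_at_le_ext _ _ (fun s => alpha i * f (L_inv x N i s) + q i (L_inv x N i s)));
  [intros; apply f_self_affine_on_piece; assumption | exact Ht |].
apply (osc_at_le_le _ _ _ (Rabs (alpha i) * r + 0)); [nra |].
apply osc_at_le_lincomb; apply (osc_at_le_comp (in_I x N)); try assumption.
apply lipschitz_on_osc_at_le; [apply Hq, Hi | apply HL, Ht].
Qed.

Lemma osc_contract c r : (forall i, (1 <= i <= N)%nat -> Rabs (alpha i) <= c) -> 0 <= r ->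
  (forall t, in_I x N t -> osc_at_le (in_I x N) f t r) ->
  forall t, in_I x N t -> osc_at_le (in_I x N) f t (c * r).
Proof.
intros Hc Hr Hosc t Ht.
assert (Hc0 : 0 <= c) by (pose proof (Hc 1%nat ltac:(lia)); pose proof (Rabs_pos (alpha 1%nat)); lra).
assert (Hpiece : forall i, (1 <= i <= N)%nat -> piece i t -> osc_at_le (piece i) f t (c * r))
  by (intros i Hi Hti; apply osc_on_piece; auto; apply Hosc, L_inv_in_I; assumption).
apply osc_at_le_split.
- destruct (Rlt_le_dec t (x N)) as [HtN | HtN].
  + destruct (node_piece_right N x t ltac:(unfold in_I in Ht; lra)) as [i [Hi Hti]].
    apply (osc_at_le_local _ (piece i)); [| apply Hpiece; unfold piece; auto; lra].
    exists (x i - t); split; [lra |]; intros s [_ Hts] Hst.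
    rewrite Rabs_right in Hst by lra; unfold piece; lra.
  + apply osc_at_le_singleton; [nra |]; intros s [Hs Hts]; unfold in_I in *; lra.
- destruct (Rlt_le_dec (x 0%nat) t) as [Ht0 | Ht0].
  + destruct (node_piece_left N x t ltac:(unfold in_I in Ht; lra)) as [i [Hi Hti]].
    apply (osc_at_le_local _ (piece i)); [| apply Hpiece; unfold piece; auto; lra].
    exists (t - x (i - 1)%nat); split; [lra |]; intros s [_ Hst'] Hst.
    rewrite Rabs_left1 in Hst by lra; unfold piece; lra.
  + apply osc_at_le_singleton; [nra |]; intros s [Hs Hst]; unfold in_I in *; lra.
Qed.

Lemma f_continuous : continuous_on_set (in_I x N) f.
Proof.
destruct (uniform_bound_lt_1 (fun i => Rabs (alpha i)) N Halpha) as [c [Hc Hci]].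
destruct (bounded_on_osc_at_le _ _ Hf_bounded) as [r [Hr Hosc]].
assert (Hiter : forall n t, in_I x N t -> osc_at_le (in_I x N) f t (c ^ n * r)).
{ induction n as [| n IH]; intros t Ht.
  - rewrite pow_O, Rmult_1_l; exact (Hosc t Ht).
  - rewrite <- tech_pow_Rmult, Rmult_assoc; apply osc_contract; auto.
    apply Rmult_le_pos; [apply pow_le |]; lra. }
apply continuous_on_set_of_osc; intros t Ht.
apply (osc_at_le_geometric _ _ _ c r Hc); intros n; exact (Hiter n t Ht).
Qed.

Let S := sum_n_m (fun j => hstep x j * fh j) 1 N.

Lemma is_RInt_piece i F : (1 <= i <= N)%nat -> is_RInt f (x 0%nat) (x N) F ->
  is_RInt f (x (i - 1)%nat) (x i) (a_coef x N i * alpha i * (F - S) + hstep x i * fh i).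
Proof.
intros Hi HF; pose proof span_pos; pose proof (Hx i Hi).
set (a := a_coef x N i); set (u := / a); set (v := - b_coef x N i / a).
assert (Ha : 0 < a) by (apply a_coef_pos; lra).
assert (HL : forall y, L_inv x N i y = u * y + v) by (intros; unfold L_inv, u, v, a, Rdiv; ring).
set (h := fun y => alpha i * f y + q i y).
set (Q := (hstep x i * fh i - alpha i * a * S) / a).
assert (Hh : is_RInt h (u * x (i - 1)%nat + v) (u * x i + v) (alpha i * F + Q)).
{ rewrite <- !HL, L_inv_left, L_inv_right by lra.
  exact (is_RInt_plus _ _ _ _ _ _ (is_RInt_scal _ _ _ (alpha i) _ HF) (Hq_int i Hi)). }
apply (is_RInt_ext (fun y => scal a (scal u (h (u * y + v))))).
- intros y Hy; rewrite Rmin_left, Rmax_right in Hy by lra.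
  rewrite <- HL; unfold h, scal; simpl; unfold mult; simpl.
  rewrite (f_self_affine_on_piece i y Hi ltac:(unfold piece; lra)); unfold u; field; lra.
- replace (a * alpha i * (F - S) + hstep x i * fh i) with (scal a (alpha i * F + Q))
    by (unfold scal, Q; simpl; unfold mult; simpl; field; lra).
  exact (is_RInt_scal _ _ _ a _ (is_RInt_comp_lin _ _ _ _ _ _ Hh)).
Qed.

Lemma sum_weights_lt_1 : sum_n_m (fun i => a_coef x N i * alpha i) 1 N < 1.
Proof.
destruct (uniform_bound_lt_1 (fun i => Rabs (alpha i)) N Halpha) as [c [Hc Hci]].
apply Rle_lt_trans with c; [| apply Hc].
apply Rle_trans with (sum_n_m (fun i => a_coef x N i * c) 1 N).
- apply sum_n_m_le_loc; intros i Hi; pose proof span_pos; pose proof (Hx i ltac:(lia)).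
  pose proof (a_coef_pos x N i ltac:(lra) ltac:(lra)); pose proof (Hci i ltac:(lia)).
  pose proof (Rle_abs (alpha i)); nra.
- right; rewrite (sum_n_m_mult_r (K := R_Ring) c), sum_a_coef by apply span_pos.
  unfold mult; simpl; ring.
Qed.

Lemma is_RInt_total : is_RInt f (x 0%nat) (x N) S.
Proof.
pose proof span_pos.
assert (Hex : ex_RInt f (x 0%nat) (x N))
  by (apply (ex_RInt_continuous_on_set (x 0%nat) (x N)); try lra; exact f_continuous).
set (F := RInt f (x 0%nat) (x N)).
assert (HF : is_RInt f (x 0%nat) (x N) F) by exact (RInt_correct _ _ _ Hex).
set (sigma := sum_n_m (fun i => a_coef x N i * alpha i) 1 N).
assert (Hchain := is_RInt_chain f x _ N (fun i Hi => is_RInt_piece i F Hi HF)).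
assert (Hsum : F = sigma * (F - S) + S).
{ transitivity (RInt f (x 0%nat) (x N)); [reflexivity |]; rewrite (is_RInt_unique _ _ _ _ Hchain).
  rewrite (sum_n_m_ext _ (fun i => plus (mult (a_coef x N i * alpha i) (F - S)) (hstep x i * fh i)))
    by reflexivity.
  rewrite sum_n_m_plus, (sum_n_m_mult_r (K := R_Ring)); reflexivity. }
assert (HFS : F = S).
{ pose proof sum_weights_lt_1 as Hsigma; fold sigma in Hsigma.
  assert (Hz : (F - S) * (1 - sigma) = 0) by lra.
  apply Rmult_integral in Hz; destruct Hz; lra. }
rewrite <- HFS; exact HF.
Qed.

End SelfAffineHistogram.

Theorem mainTheorem9
  (N : nat) (x : nat -> R) (fh : nat -> R) (alpha : nat -> R)
  (q : nat -> R -> R) (f : R -> R) (y0 yN : R) :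
  (2 <= N)%nat ->
  (forall i, (1 <= i <= N)%nat -> x (i - 1)%nat < x i) ->
  (forall i, (1 <= i <= N)%nat -> Rabs (alpha i) < 1) ->
  (forall i, (1 <= i <= N)%nat -> lipschitz_on (in_I x N) (q i)) ->
  bounded_on (in_I x N) f ->
  (forall i t, (1 <= i <= N)%nat -> in_Ii x N i t ->
     f t = alpha i * f (L_inv x N i t) + q i (L_inv x N i t)) ->
  (forall i, (1 <= i <= N)%nat ->
     is_RInt (q i) (x 0%nat) (x N)
       ((hstep x i * fh i
         - alpha i * a_coef x N i
             * sum_n_m (fun j => hstep x j * fh j) 1 N) / a_coef x N i)) ->
  q 1%nat (x 0%nat) = y0 * (1 - alpha 1%nat) ->
  q N (x N) = yN * (1 - alpha N) ->
  (forall i, (1 <= i <= N - 1)%nat ->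
     alpha (i + 1)%nat * y0 + q (i + 1)%nat (x 0%nat) = alpha i * yN + q i (x N)) ->
  continuous_on_set (in_I x N) f /\
  (forall i, (1 <= i <= N)%nat -> is_RInt f (x (i - 1)%nat) (x i) (hstep x i * fh i)).
Proof.
intros HN Hx Halpha Hq Hbounded Hf Hq_int Hy0 HyN Hy_match; split.
- exact (f_continuous N x alpha q f y0 yN HN Hx Halpha Hq Hbounded Hf Hy0 HyN Hy_match).
- intros i Hi.
  pose proof (is_RInt_total N x fh alpha q f y0 yN HN Hx Halpha Hq Hbounded Hf Hq_int Hy0 HyN Hy_match)
    as Htotal.
  pose proof (is_RInt_piece N x fh alpha q f y0 yN HN Hx Halpha Hf Hq_int Hy0 HyN Hy_match i _ Hi Htotal)
    as Hpiece.
  rewrite Rminus_diag, Rmult_0_r, Rplus_0_l in Hpiece; exact Hpiece.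
Qed.
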